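(* Let $G$ be a modular noetherian right $\ell$-group in which the meet $s^{-1} := \bigwedge X(G^-)$ exists. Then the join of all elements covering $e$ exists and equals $s$: \[ s = \bigvee \{ g \in G : g \succ e\}. \] Moreover, the interval $[e,s]$ is a modular geometric lattice.
   Context: A right $\ell$-group is a group $G$ (identity $e$) with a right-invariant partial order making $G$ a lattice. It is modular if the lattice is modular. It is noetherian if for each $g$ the set $\{h \geq g\}$ satisfies the descending chain condition and the set $\{h \leq g\}$ satisfies the ascending chain condition. $G^- = \{g \leq e\}$ and $X(G^-)$ is the set of elements covered by $e$. The notation $g \succ e$ means that $g$ covers $e$. A modular lattice of finite length is geometric if every element is the join of a finite (possibly empty) set of atoms. *)

From Stdlib Require Import List Arith.
Import ListNotations.

Set Implicit Arguments.
Section OrderNotions.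
Variable T : Type.
Variable le : T -> T -> Prop.

(* [P] is a subset of T; all notions are relative to the induced order on P. *)
Definition pair (a b : T) : T -> Prop := fun z => z = a \/ z = b.

Definition lub_in (P : T -> Prop) (A : T -> Prop) (x : T) : Prop :=
  P x /\ (forall a, A a -> le a x) /\
  (forall y, P y -> (forall a, A a -> le a y) -> le x y).

Definition glb_in (P : T -> Prop) (A : T -> Prop) (x : T) : Prop :=
  P x /\ (forall a, A a -> le x a) /\
  (forall y, P y -> (forall a, A a -> le y a) -> le y x).

Definition covers_in (P : T -> Prop) (a b : T) : Prop :=
  P a /\ P b /\ le b a /\ a <> b /\
  (forall c, P c -> le b c -> le c a -> c = b \/ c = a).

Definition partial_order : Prop :=
  (forall a, le a a) /\ (forall a b, le a b -> le b a -> a = b) /\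
  (forall a b c, le a b -> le b c -> le a c).

Definition lattice_on (P : T -> Prop) : Prop :=
  forall a b, P a -> P b ->
    (exists x, lub_in P (pair a b) x) /\ (exists x, glb_in P (pair a b) x).

(* modular law: a <= c -> a v (b ^ c) = (a v b) ^ c *)
Definition modular_on (P : T -> Prop) : Prop :=
  forall a b c x y z w, P a -> P b -> P c -> le a c ->
    glb_in P (pair b c) x -> lub_in P (pair a x) y ->
    lub_in P (pair a b) z -> glb_in P (pair z c) w -> y = w.

Definition finite_length_on (P : T -> Prop) : Prop :=
  exists n, forall (k : nat) (f : nat -> T),
    (forall i, i <= k -> P (f i)) ->
    (forall i, i < k -> le (f i) (f (S i)) /\ f i <> f (S i)) -> k <= n.

Definition atom_on (P : T -> Prop) (x : T) : Prop :=
  exists b, (P b /\ forall y, P y -> le b y) /\ covers_in P x b.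

Definition modular_geometric_on (P : T -> Prop) : Prop :=
  lattice_on P /\ modular_on P /\ finite_length_on P /\
  forall x, P x -> exists l : list T,
    (forall a, In a l -> atom_on P a) /\ lub_in P (fun a => In a l) x.

Definition noetherian : Prop :=
  forall g,
    (forall f : nat -> T, (forall n, le g (f n)) -> (forall n, le (f (S n)) (f n)) ->
       exists N, forall n, N <= n -> f n = f N) /\
    (forall f : nat -> T, (forall n, le (f n) g) -> (forall n, le (f n) (f (S n))) ->
       exists N, forall n, N <= n -> f n = f N).

End OrderNotions.

Definition setT {T : Type} : T -> Prop := fun _ => True.

Definition right_lgroup (T : Type) (mul : T -> T -> T) (inv : T -> T) (e : T)
  (le : T -> T -> Prop) : Prop :=
  (forall a b c, mul (mul a b) c = mul a (mul b c)) /\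
  (forall a, mul e a = a) /\ (forall a, mul a e = a) /\
  (forall a, mul (inv a) a = e) /\ (forall a, mul a (inv a) = e) /\
  partial_order le /\
  (forall g h k, le g h -> le (mul g k) (mul h k)) /\
  lattice_on le setT.

(** Right multiplication is an order automorphism, so it preserves covers and finite joins
    and meets. By DCC the meet [t] of the coatoms of [e] is already the meet of finitely many
    of them; in a modular lattice this makes [e] the join of [t] and finitely many atoms over
    [t], and translating by [s = inv t] exhibits [s] as the join of [e] with finitely many
    covers of [e]. An interval [[z, w]] of a modular lattice whose top is the join of [z] with
    finitely many atoms over [z] is geometric, of length at most the number of these atoms.
    Finally every cover [g] of [e] lies below [s]: for the join [w] of [g] and [s] the same
    argument gives [t <= inv w], and DCC then forces [w = s]. *)

From Stdlib Require Import List Arith Lia Classical ClassicalEpsilon.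
Import ListNotations.
Set Implicit Arguments.
Unset Strict Implicit.

Definition dual {T : Type} (le : T -> T -> Prop) : T -> T -> Prop := fun a b => le b a.

Definition interval {T : Type} (le : T -> T -> Prop) (z w : T) : T -> Prop :=
  fun x => le z x /\ le x w.

Definition lub_list {T : Type} (le : T -> T -> Prop) (z : T) (l : list T) : T -> Prop :=
  lub_in le setT (fun x => x = z \/ In x l).

Definition glb_list {T : Type} (le : T -> T -> Prop) (z : T) (l : list T) : T -> Prop :=
  glb_in le setT (fun x => x = z \/ In x l).

Definition atoms_over {T : Type} (le : T -> T -> Prop) (z : T) (l : list T) : Prop :=
  forall a, In a l -> covers_in le setT a z.

Definition coatoms_under {T : Type} (le : T -> T -> Prop) (w : T) (l : list T) : Prop :=
  forall m, In m l -> covers_in le setT w m.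

Definition strict_chain {T : Type} (le : T -> T -> Prop) (k : nat) (f : nat -> T) : Prop :=
  forall i, i < k -> le (f i) (f (S i)) /\ f i <> f (S i).

Definition chain_in {T : Type} (le : T -> T -> Prop) (z w : T) (k : nat) (f : nat -> T) :
  Prop := forall i, i <= k -> interval le z w (f i).

Lemma nat_first_failure (P : nat -> Prop) (n : nat) :
  exists j, j <= S n /\ (forall p, p < j -> P p) /\ (j <= n -> ~ P j).
Proof.
  induction n as [|n (j & Hj & Hbefore & Hfail)].
  - destruct (classic (P 0)) as [H0|H0].
    + exists 1; split; [lia|split; [|lia]].
      intros p Hp; replace p with 0 by lia; exact H0.
    + exists 0; split; [lia|split; [intros p Hp; lia|auto]].
  - destruct (Nat.eq_dec j (S n)) as [->|Hne].
    + destruct (classic (P (S n))) as [HP|HP].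
      * exists (S (S n)); split; [lia|split; [|lia]].
        intros p Hp; destruct (Nat.eq_dec p (S n)) as [->|]; [exact HP|apply Hbefore; lia].
      * exists (S n); split; [lia|split; auto].
    + exists j; split; [lia|split; [exact Hbefore|intros _; apply Hfail; lia]].
Qed.

Lemma dcc_minimal {T : Type} (le : T -> T -> Prop) (g : T) (A : T -> Prop) (m0 : T) :
  (forall f : nat -> T, (forall n, le g (f n)) -> (forall n, le (f (S n)) (f n)) ->
     exists N, forall n, N <= n -> f n = f N) ->
  (forall m, A m -> le g m) -> A m0 ->
  exists m, A m /\ forall m', A m' -> le m' m -> m' = m.
Proof.
  intros Hdcc Hlow Hm0; apply NNPP; intro Hnone.
  assert (Hstep : forall m, A m -> exists m', A m' /\ le m' m /\ m' <> m).
  { intros m Hm; apply NNPP; intro Hmin; apply Hnone; exists m; split; [exact Hm|].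
    intros m' Hm' Hle; apply NNPP; intro Hne; apply Hmin; eauto. }
  pose (next m := epsilon (inhabits m0) (fun m' => A m' /\ le m' m /\ m' <> m)).
  pose (f n := Nat.iter n next m0).
  assert (HA : forall n, A (f n)).
  { induction n as [|n IH]; [exact Hm0|exact (proj1 (epsilon_spec _ _ (Hstep _ IH)))]. }
  assert (Hdesc : forall n, le (f (S n)) (f n) /\ f (S n) <> f n)
    by (intro n; exact (proj2 (epsilon_spec _ _ (Hstep _ (HA n))))).
  destruct (Hdcc f) as [N HN]; [intro n; apply Hlow, HA|intro n; apply Hdesc|].
  apply (proj2 (Hdesc N)), HN; lia.
Qed.

Section PartialOrder.
Variables (T : Type) (le : T -> T -> Prop).
Local Notation cov := (covers_in le setT).

Lemma covers_intro a b :
  le b a -> a <> b -> (forall c, le b c -> le c a -> c = b \/ c = a) -> cov a b.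
Proof. intros; repeat split; auto. Qed.

Lemma covers_le a b : cov a b -> le b a.
Proof. intros (_ & _ & H & _); exact H. Qed.

Lemma covers_neq a b : cov a b -> a <> b.
Proof. intros (_ & _ & _ & H & _); exact H. Qed.

Lemma covers_between a b c : cov a b -> le b c -> le c a -> c = b \/ c = a.
Proof. intros (_ & _ & _ & _ & H); apply H; exact I. Qed.

Lemma covers_sub (P : T -> Prop) a b : P a -> P b -> cov a b -> covers_in le P a b.
Proof. intros Pa Pb (_ & _ & H1 & H2 & H3); repeat split; auto; intros c _; apply H3; exact I. Qed.

Lemma covers_dual P a b : covers_in (dual le) P a b <-> covers_in le P b a.
Proof.
  unfold dual; split; intros (Pa & Pb & H1 & H2 & H3); repeat split; auto;
    intros c Pc Hc1 Hc2; destruct (H3 c Pc Hc2 Hc1); auto.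
Qed.

Hypothesis le_po : partial_order le.

Lemma le_refl a : le a a.
Proof. apply le_po. Qed.

Lemma le_anti a b : le a b -> le b a -> a = b.
Proof. apply le_po. Qed.

Lemma le_trans a b c : le a b -> le b c -> le a c.
Proof. apply le_po. Qed.

Lemma partial_order_dual : partial_order (dual le).
Proof.
  unfold dual; split; [|split]; eauto using le_refl, le_anti, le_trans.
Qed.

Lemma lub_unique P A x y : lub_in le P A x -> lub_in le P A y -> x = y.
Proof.
  intros (Px & Ux & Lx) (Py & Uy & Ly); apply le_anti; [apply Lx|apply Ly]; auto.
Qed.

Lemma lub_list_nil z : lub_list le z [] z.
Proof.
  split; [exact I|split]; [intros x [->|[]]; apply le_refl|].
  intros y _ H; apply H; left; reflexivity.
Qed.

Lemma lub_list_cons z l w a v :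
  lub_list le z l w -> lub_in le setT (pair a w) v -> lub_list le z (a :: l) v.
Proof.
  intros (_ & Uw & Lw) (_ & Uv & Lv); split; [exact I|split].
  - intros x [-> | [-> | Hx]].
    + apply le_trans with w; [apply Uw; left|apply Uv; right]; reflexivity.
    + apply Uv; left; reflexivity.
    + apply le_trans with w; [apply Uw; right; exact Hx|apply Uv; right; reflexivity].
  - intros y _ Hy; apply Lv; [exact I|]; intros x [-> | ->]; [apply Hy; right; left; reflexivity|].
    apply Lw; [exact I|]; intros q [-> | Hq]; apply Hy; [left|right; right]; auto.
Qed.

Lemma strict_chain_le k f :
  strict_chain le k f -> forall i j, i <= j -> j <= k -> le (f i) (f j).
Proof.
  intros Hf i j Hij Hjk; induction j as [|j IH].
  - replace i with 0 by lia; apply le_refl.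
  - destruct (Nat.eq_dec i (S j)) as [->|Hne]; [apply le_refl|].
    apply le_trans with (f j); [apply IH; lia|apply Hf; lia].
Qed.

Lemma strict_chain_skip (g : nat -> T) k j :
  (forall p, p < S k -> le (g p) (g (S p))) ->
  (forall p, p < S k -> S p <> j -> g p <> g (S p)) ->
  strict_chain le k (fun i => g (if i <? j then i else S i)).
Proof.
  intros Hmono Hstrict i Hi.
  destruct (Nat.ltb_spec i j), (Nat.ltb_spec (S i) j); try lia.
  - split; [apply Hmono|apply Hstrict]; lia.
  - assert (Hle : le (g (S i)) (g (S (S i)))) by (apply Hmono; lia).
    split; [apply le_trans with (g (S i)); [apply Hmono; lia|exact Hle]|].
    intro E; apply (Hstrict (S i)); [lia|lia|].
    apply le_anti; [exact Hle|rewrite <- E; apply Hmono; lia].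
  - split; [apply Hmono|apply Hstrict]; lia.
Qed.

End PartialOrder.

Definition join {T : Type} (le : T -> T -> Prop) (a b : T) : T :=
  epsilon (inhabits a) (lub_in le setT (pair a b)).

Definition meet {T : Type} (le : T -> T -> Prop) (a b : T) : T :=
  epsilon (inhabits a) (glb_in le setT (pair a b)).

Section Lattice.
Variables (T : Type) (le : T -> T -> Prop).
Hypothesis le_po : partial_order le.
Hypothesis le_lattice : lattice_on le setT.
Local Notation cov := (covers_in le setT).
Local Notation join := (join le).
Local Notation meet := (meet le).

Lemma lattice_dual : lattice_on (dual le) setT.
Proof. intros a b Pa Pb; destruct (le_lattice Pa Pb); split; assumption. Qed.

Lemma join_spec a b : lub_in le setT (pair a b) (join a b).
Proof. exact (epsilon_spec (inhabits a) _ (proj1 (le_lattice (a := a) (b := b) I I))). Qed.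

Lemma meet_spec a b : glb_in le setT (pair a b) (meet a b).
Proof. exact (epsilon_spec (inhabits a) _ (proj2 (le_lattice (a := a) (b := b) I I))). Qed.

Lemma le_joinl a b : le a (join a b).
Proof. apply (join_spec a b); left; reflexivity. Qed.

Lemma le_joinr a b : le b (join a b).
Proof. apply (join_spec a b); right; reflexivity. Qed.

Lemma join_least a b c : le a c -> le b c -> le (join a b) c.
Proof. intros Ha Hb; apply (join_spec a b); [exact I|]; intros x [-> | ->]; assumption. Qed.

Lemma le_meetl a b : le (meet a b) a.
Proof. apply (meet_spec a b); left; reflexivity. Qed.

Lemma le_meetr a b : le (meet a b) b.
Proof. apply (meet_spec a b); right; reflexivity. Qed.

Lemma meet_greatest a b c : le c a -> le c b -> le c (meet a b).
Proof. intros Ha Hb; apply (meet_spec a b); [exact I|]; intros x [-> | ->]; assumption. Qed.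

Lemma join_eq_r a b : le a b -> join a b = b.
Proof.
  intro H; apply (le_anti le_po); [|apply le_joinr].
  apply join_least; [exact H|apply (le_refl le_po)].
Qed.

Lemma join_eq_l a b : le b a -> join a b = a.
Proof.
  intro H; apply (le_anti le_po); [|apply le_joinl].
  apply join_least; [apply (le_refl le_po)|exact H].
Qed.

Lemma meet_eq_r a b : le b a -> meet a b = b.
Proof.
  intro H; apply (le_anti le_po); [apply le_meetr|].
  apply meet_greatest; [exact H|apply (le_refl le_po)].
Qed.

Lemma joinC a b : join a b = join b a.
Proof. apply (le_anti le_po); apply join_least; auto using le_joinl, le_joinr. Qed.

Lemma meetC a b : meet a b = meet b a.
Proof. apply (le_anti le_po); apply meet_greatest; auto using le_meetl, le_meetr. Qed.

Lemma le_meet2r x y u : le x y -> le (meet x u) (meet y u).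
Proof.
  intro H; apply meet_greatest; [apply (le_trans le_po) with x; [apply le_meetl|exact H]|].
  apply le_meetr.
Qed.

Lemma lub_list_exists z l : exists w, lub_list le z l w.
Proof.
  induction l as [|a l [w Hw]]; [exists z; apply (lub_list_nil le_po)|].
  exists (join a w); exact (lub_list_cons le_po Hw (join_spec a w)).
Qed.

Lemma lub_list_cons_eq z l a w' w :
  lub_list le z l w' -> lub_list le z (a :: l) w -> w = join a w'.
Proof. intros Hw' Hw; exact (lub_unique le_po Hw (lub_list_cons le_po Hw' (join_spec a w'))). Qed.

Lemma glb_list_nil z : glb_list le z [] z.
Proof. exact (lub_list_nil (partial_order_dual le_po) z). Qed.

Lemma glb_list_cons z l w a v :
  glb_list le z l w -> glb_in le setT (pair a w) v -> glb_list le z (a :: l) v.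
Proof. exact (@lub_list_cons T (dual le) (partial_order_dual le_po) z l w a v). Qed.

Lemma interval_lub z w a b :
  interval le z w a -> interval le z w b -> lub_in le (interval le z w) (pair a b) (join a b).
Proof.
  intros [Hza Haw] [Hzb Hbw]; split; [split|split].
  - apply (le_trans le_po) with a; [exact Hza|apply le_joinl].
  - apply join_least; assumption.
  - intros x [-> | ->]; [apply le_joinl|apply le_joinr].
  - intros y _ Hy; apply join_least; apply Hy; [left|right]; reflexivity.
Qed.

Lemma interval_glb z w a b :
  interval le z w a -> interval le z w b -> glb_in le (interval le z w) (pair a b) (meet a b).
Proof.
  intros [Hza Haw] [Hzb Hbw]; split; [split|split].
  - apply meet_greatest; assumption.
  - apply (le_trans le_po) with a; [apply le_meetl|exact Haw].
  - intros x [-> | ->]; [apply le_meetl|apply le_meetr].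
  - intros y _ Hy; apply meet_greatest; apply Hy; [left|right]; reflexivity.
Qed.

Lemma interval_lattice z w : lattice_on le (interval le z w).
Proof.
  intros a b Ha Hb; split.
  - exists (join a b); apply interval_lub; assumption.
  - exists (meet a b); apply interval_glb; assumption.
Qed.

Hypothesis le_modular : modular_on le setT.

Lemma modular_law a b c : le a c -> join a (meet b c) = meet (join a b) c.
Proof.
  intro H; eapply le_modular; [exact I|exact I|exact I|exact H|apply meet_spec|apply join_spec|
    apply join_spec|apply meet_spec].
Qed.

Lemma interval_modular z w : modular_on le (interval le z w).
Proof.
  intros a b c x y v u Ha Hb Hc Hac Hx Hy Hv Hu.
  assert (Ex : x = meet b c)
    by exact (lub_unique (partial_order_dual le_po) Hx (interval_glb Hb Hc)).
  subst x.
  assert (Hbc : interval le z w (meet b c)) by exact (proj1 (interval_glb Hb Hc)).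
  assert (Hab : interval le z w (join a b)) by exact (proj1 (interval_lub Ha Hb)).
  rewrite (lub_unique le_po Hy (interval_lub Ha Hbc)), (lub_unique le_po Hv (interval_lub Ha Hb))
    in *.
  rewrite (lub_unique (partial_order_dual le_po) Hu (interval_glb Hab Hc)).
  exact (modular_law b Hac).
Qed.

Lemma covers_join x y : cov y (meet x y) -> cov (join x y) x.
Proof.
  intro Hc; apply covers_intro; [apply le_joinl| |].
  - intro E; apply (covers_neq Hc); symmetry; apply meet_eq_r.
    rewrite <- E; apply le_joinr.
  - intros c Hxc Hcj.
    destruct (covers_between (c := meet c y) Hc) as [E|E].
    + apply meet_greatest; [apply (le_trans le_po) with x; [apply le_meetl|exact Hxc]|].
      apply le_meetr.
    + apply le_meetr.
    + left; rewrite <- (meet_eq_r Hcj), <- (modular_law y Hxc), meetC, E.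
      apply join_eq_l, le_meetl.
    + right; apply (le_anti le_po); [exact Hcj|]; apply join_least; [exact Hxc|].
      rewrite <- E; apply le_meetl.
Qed.

Lemma covers_meet x y : cov (join x y) x -> cov y (meet x y).
Proof.
  intro Hc; apply covers_intro; [apply le_meetr| |].
  - intro E; apply (covers_neq Hc); apply join_eq_l; rewrite E; apply le_meetl.
  - intros c Hmc Hcy.
    destruct (covers_between (c := join x c) Hc) as [E|E].
    + apply le_joinl.
    + apply join_least; [apply le_joinl|apply (le_trans le_po) with y; [exact Hcy|apply le_joinr]].
    + left; apply (le_anti le_po); [|exact Hmc]; apply meet_greatest; [|exact Hcy].
      rewrite <- E; apply le_joinr.
    + right; rewrite <- (join_eq_l Hmc), (modular_law x Hcy), joinC, E.
      apply meet_eq_r, le_joinr.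
Qed.

Lemma eq_of_meet_join x y u : le x y -> meet x u = meet y u -> join x u = join y u -> x = y.
Proof.
  intros Hxy Hm Hj.
  rewrite <- (join_eq_l (le_meetl x u)), Hm, meetC, (modular_law u Hxy), Hj.
  apply meet_eq_r, le_joinl.
Qed.

Lemma lt_meet_of_join_eq x y u :
  le x y -> x <> y -> join x u = join y u -> le (meet x u) (meet y u) /\ meet x u <> meet y u.
Proof.
  intros Hxy Hne Hj; split; [apply le_meet2r, Hxy|].
  intro Hm; apply Hne; exact (eq_of_meet_join Hxy Hm Hj).
Qed.

Lemma meet_atom_eq z a w' : cov a z -> le z w' -> ~ le a w' -> meet w' a = z.
Proof.
  intros Ha Hzw Haw.
  destruct (covers_between (c := meet w' a) Ha) as [E|E];
    [apply meet_greatest; [exact Hzw|exact (covers_le Ha)]|apply le_meetr|exact E|].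
  exfalso; apply Haw; rewrite <- E; apply le_meetl.
Qed.

Lemma covers_join_atom z a w' : cov a z -> le z w' -> ~ le a w' -> cov (join w' a) w'.
Proof. intros Ha Hzw Haw; apply covers_join; rewrite (meet_atom_eq Ha Hzw Haw); exact Ha. Qed.

Lemma meet_join_atom z a w' m : meet w' a = z -> le z m -> le m w' -> meet (join m a) w' = m.
Proof.
  intros Hz Hzm Hmw; rewrite <- (modular_law a Hmw), meetC, Hz; exact (join_eq_l Hzm).
Qed.

Lemma covers_join_coatom z a w' m :
  meet w' a = z -> le z m -> cov w' m -> cov (join w' a) (join m a).
Proof.
  intros Hz Hzm Hm.
  assert (Hmw : le m w') by exact (covers_le Hm).
  assert (E : join (join m a) w' = join w' a).
  { apply (le_anti le_po); apply join_least.
    - apply join_least; [|apply le_joinr].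
      apply (le_trans le_po) with w'; [exact Hmw|apply le_joinl].
    - apply le_joinl.
    - apply le_joinr.
    - apply (le_trans le_po) with (join m a); [apply le_joinr|apply le_joinl]. }
  rewrite <- E; apply covers_join; rewrite (meet_join_atom Hz Hzm Hmw); exact Hm.
Qed.

Lemma glb_list_join_atom z a w' ml :
  meet w' a = z -> coatoms_under le w' ml -> glb_list le w' ml z ->
  glb_list le (join w' a) (w' :: map (fun m => join m a) ml) z.
Proof.
  intros Hz Hml (_ & Hlow & Hgreat).
  assert (Hzw : le z w') by (apply Hlow; left; reflexivity).
  assert (Hzm : forall m, In m ml -> le z m) by (intros m Hm; apply Hlow; right; exact Hm).
  split; [exact I|split].
  - intros x [-> | [<- | Hx]];
      [apply (le_trans le_po) with w'; [exact Hzw|apply le_joinl]|exact Hzw|].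
    apply in_map_iff in Hx as (m & <- & Hm).
    apply (le_trans le_po) with m; [exact (Hzm m Hm)|apply le_joinl].
  - intros y _ Hy.
    assert (Hyw : le y w') by (apply Hy; right; left; reflexivity).
    apply Hgreat; [exact I|]; intros m [-> | Hm]; [exact Hyw|].
    rewrite <- (meet_join_atom Hz (Hzm m Hm) (covers_le (Hml m Hm))).
    apply meet_greatest; [|exact Hyw].
    apply Hy; right; right; apply in_map_iff; exists m; split; [reflexivity|exact Hm].
Qed.

Lemma meet_coatoms_of_join_atoms z l w :
  atoms_over le z l -> lub_list le z l w -> exists ml, coatoms_under le w ml /\ glb_list le w ml z.
Proof.
  revert w; induction l as [|a l IH]; intros w Hl Hw.
  - rewrite (lub_unique le_po Hw (lub_list_nil le_po z)).
    exists []; split; [intros m []|apply glb_list_nil].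
  - destruct (lub_list_exists z l) as [w' Hw'].
    rewrite (lub_list_cons_eq Hw' Hw).
    destruct (IH w' (fun b Hb => Hl b (or_intror Hb)) Hw') as (ml & Hml & Hglb).
    assert (Hzw : le z w') by (apply Hw'; left; reflexivity).
    assert (Ha : cov a z) by (apply Hl; left; reflexivity).
    destruct (classic (le a w')) as [Haw|Haw]; [rewrite (join_eq_r Haw); eauto|].
    pose proof (meet_atom_eq Ha Hzw Haw) as Hz.
    rewrite joinC; exists (w' :: map (fun m => join m a) ml); split.
    + intros m [<- | Hm]; [exact (covers_join_atom Ha Hzw Haw)|].
      apply in_map_iff in Hm as (m0 & <- & Hm0).
      apply (covers_join_coatom Hz); [apply Hglb; right; exact Hm0|exact (Hml m0 Hm0)].
    + exact (glb_list_join_atom Hz Hml Hglb).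
Qed.

(* Meeting with [w'] keeps consecutive steps distinct unless their joins with [w'] differ
   (eq_of_meet_join), and these joins jump from [w'] to [w] only once. *)
Lemma chain_project_covered z w' w k f :
  le z w' -> cov w w' -> chain_in le z w (S k) f -> strict_chain le (S k) f ->
  exists h, chain_in le z w' k h /\ strict_chain le k h.
Proof.
  intros Hzw Hcov Hin Hf.
  destruct (nat_first_failure (fun p => le (f p) w') (S k)) as (j & Hj & Hbelow & Hfail).
  assert (Hjoin_below : forall p, p < j -> join (f p) w' = w') by (intros; apply join_eq_r; auto).
  assert (Hjoin_above : forall p, j <= p -> p <= S k -> join (f p) w' = w).
  { intros p Hjp Hpk.
    destruct (covers_between (c := join (f p) w') Hcov) as [E|E]; [apply le_joinr| | |exact E].
    - apply join_least; [apply Hin, Hpk|exact (covers_le Hcov)].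
    - exfalso; apply Hfail; [lia|].
      apply (le_trans le_po) with (f p); [apply (strict_chain_le le_po Hf); lia|].
      rewrite <- E; apply le_joinl. }
  exists (fun i => meet (f (if i <? j then i else S i)) w'); split.
  - intros i Hi; split; [apply meet_greatest; [apply Hin|exact Hzw]|apply le_meetr].
    destruct (i <? j); lia.
  - apply (strict_chain_skip le_po (g := fun p => meet (f p) w') (j := j));
      [intros p Hp; apply le_meet2r, Hf, Hp|].
    intros p Hp Hpj; apply lt_meet_of_join_eq; try apply Hf, Hp.
    destruct (Nat.lt_ge_cases p j).
    + rewrite !Hjoin_below; [reflexivity|lia|lia].
    + rewrite !Hjoin_above; [reflexivity|lia|lia|lia|lia].
Qed.

Lemma chain_length_le_atoms z l w :
  atoms_over le z l -> lub_list le z l w ->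
  forall k f, chain_in le z w k f -> strict_chain le k f -> k <= length l.
Proof.
  revert w; induction l as [|a l IH]; intros w Hl Hw k f Hin Hf.
  - rewrite (lub_unique le_po Hw (lub_list_nil le_po z)) in Hin.
    destruct k as [|k]; [lia|exfalso].
    apply (proj2 (Hf 0 (Nat.lt_0_succ k))).
    destruct (Hin 0), (Hin 1); try lia.
    transitivity z; [|symmetry]; apply (le_anti le_po); assumption.
  - destruct (lub_list_exists z l) as [w' Hw'].
    rewrite (lub_list_cons_eq Hw' Hw) in Hin; simpl.
    assert (IH' := IH w' (fun b Hb => Hl b (or_intror Hb)) Hw').
    assert (Hzw : le z w') by (apply Hw'; left; reflexivity).
    destruct (classic (le a w')) as [Haw|Haw].
    + rewrite (join_eq_r Haw) in Hin; specialize (IH' k f Hin Hf); lia.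
    + destruct k as [|k]; [lia|].
      rewrite joinC in Hin.
      assert (Hcov := covers_join_atom (Hl a (or_introl eq_refl)) Hzw Haw).
      destruct (chain_project_covered Hzw Hcov Hin Hf) as (h & Hh & Hhf).
      specialize (IH' k h Hh Hhf); lia.
Qed.

Lemma interval_finite_length z l w :
  atoms_over le z l -> lub_list le z l w -> finite_length_on le (interval le z w).
Proof.
  intros Hl Hw; exists (length l); intros k f.
  exact (chain_length_le_atoms Hl Hw (k := k) (f := f)).
Qed.

Lemma coatoms_restrict x w ml :
  le x w -> coatoms_under le w ml ->
  exists ml', coatoms_under le x ml' /\
    forall y, le y x -> (forall m, In m ml -> le y m) <-> (forall m, In m ml' -> le y m).
Proof.
  intros Hxw; induction ml as [|m ml IH]; intros Hml.
  - exists []; split; [intros m []|intros y _; split; intros _ m []].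
  - destruct IH as (ml' & Hml' & Hiff); [intros m' Hm'; apply Hml; right; exact Hm'|].
    assert (Hwm : cov w m) by (apply Hml; left; reflexivity).
    destruct (classic (le x m)) as [Hxm|Hxm].
    + exists ml'; split; [exact Hml'|intros y Hyx; specialize (Hiff y Hyx); split; intros H].
      * apply Hiff; intros m' Hm'; apply H; right; exact Hm'.
      * intros m' [<- | Hm']; [exact (le_trans le_po Hyx Hxm)|exact (proj2 Hiff H m' Hm')].
    + exists (meet m x :: ml'); split.
      * intros m' [<- | Hm']; [|auto].
        apply covers_meet.
        destruct (covers_between (c := join m x) Hwm) as [E|E];
          [apply le_joinl|apply join_least; [exact (covers_le Hwm)|exact Hxw]| |].
        -- exfalso; apply Hxm; rewrite <- E; apply le_joinr.
        -- rewrite E; exact Hwm.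
      * intros y Hyx; specialize (Hiff y Hyx); split; intros H m' [<- | Hm'].
        -- apply meet_greatest; [apply H; left; reflexivity|exact Hyx].
        -- apply (proj1 Hiff); [intros m'' Hm''; apply H; right; exact Hm''|exact Hm'].
        -- apply (le_trans le_po) with (meet m x); [apply H; left; reflexivity|apply le_meetl].
        -- apply (proj2 Hiff); [intros m'' Hm''; apply H; right; exact Hm''|exact Hm'].
Qed.

Lemma modular_dual : modular_on (dual le) setT.
Proof.
  intros a b c x y v u _ _ _ Hca Hx Hy Hv Hu.
  assert (Ex : x = join b c) by exact (lub_unique le_po Hx (join_spec b c)).
  assert (Ev : v = meet a b) by exact (lub_unique (partial_order_dual le_po) Hv (meet_spec a b)).
  subst x v.
  rewrite (lub_unique (partial_order_dual le_po) Hy (meet_spec a (join b c))),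
    (lub_unique le_po Hu (join_spec (meet a b) c)).
  rewrite joinC, meetC, <- (modular_law b Hca), joinC, meetC; reflexivity.
Qed.

End Lattice.

Section Duality.
Variables (T : Type) (le : T -> T -> Prop).
Hypothesis le_po : partial_order le.
Hypothesis le_lattice : lattice_on le setT.
Hypothesis le_modular : modular_on le setT.

Lemma join_atoms_of_meet_coatoms z l w :
  coatoms_under le z l -> glb_list le z l w -> exists ml, atoms_over le w ml /\ lub_list le w ml z.
Proof.
  intros Hl Hw.
  destruct (meet_coatoms_of_join_atoms (partial_order_dual le_po) (lattice_dual le_lattice)
              (modular_dual le_po le_lattice le_modular) (z := z) (l := l) (w := w))
    as (ml & Hml & Hlub).
  - intros a Ha; apply covers_dual, Hl, Ha.
  - exact Hw.
  - exists ml; split; [intros m Hm; apply covers_dual, Hml, Hm|exact Hlub].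
Qed.

Lemma interval_atomistic z l w x :
  atoms_over le z l -> lub_list le z l w -> interval le z w x ->
  exists lx, atoms_over le z lx /\ lub_list le z lx x.
Proof.
  intros Hl Hw [Hzx Hxw].
  destruct (meet_coatoms_of_join_atoms le_po le_lattice le_modular Hl Hw) as (ml & Hml & Hglb).
  destruct (coatoms_restrict le_po le_lattice le_modular Hxw Hml) as (ml' & Hml' & Hiff).
  apply (join_atoms_of_meet_coatoms Hml').
  destruct Hglb as (_ & Hlow & Hgreat); split; [exact I|split].
  - intros y [-> | Hy]; [exact Hzx|].
    apply (proj1 (Hiff z Hzx)); [intros m Hm; apply Hlow; right; exact Hm|exact Hy].
  - intros y _ Hy.
    assert (Hyx : le y x) by (apply Hy; left; reflexivity).
    apply Hgreat; [exact I|]; intros m [-> | Hm]; [exact (le_trans le_po Hyx Hxw)|].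
    apply (proj2 (Hiff y Hyx)); [intros m' Hm'; apply Hy; right; exact Hm'|exact Hm].
Qed.

Lemma interval_modular_geometric z l w :
  atoms_over le z l -> lub_list le z l w -> modular_geometric_on le (interval le z w).
Proof.
  intros Hl Hw.
  assert (Hzw : le z w) by (apply Hw; left; reflexivity).
  assert (Hz : interval le z w z) by (split; [apply (le_refl le_po)|exact Hzw]).
  split; [apply interval_lattice; assumption|].
  split; [apply interval_modular; assumption|].
  split; [exact (interval_finite_length le_po le_lattice le_modular Hl Hw)|].
  intros x Hx; destruct (interval_atomistic Hl Hw Hx) as (lx & Hlx & (_ & Hub & Hleast)).
  assert (Hlx_le : forall a, In a lx -> le a x) by (intros a Ha; apply Hub; right; exact Ha).
  exists lx; split.
  - intros a Ha; exists z; split; [split; [exact Hz|intros y Hy; apply Hy]|].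
    assert (Hza : le z a) by exact (covers_le (Hlx a Ha)).
    apply covers_sub; [|exact Hz|exact (Hlx a Ha)].
    split; [exact Hza|exact (le_trans le_po (Hlx_le a Ha) (proj2 Hx))].
  - split; [exact Hx|split; [exact Hlx_le|]].
    intros y Hy Hub_y; apply Hleast; [exact I|]; intros a [-> | Ha]; [apply Hy|exact (Hub_y a Ha)].
Qed.

End Duality.

Section OrderAutomorphism.
Variables (T : Type) (le : T -> T -> Prop) (f g : T -> T).
Hypotheses (fK : forall x, g (f x) = x) (gK : forall x, f (g x) = x).
Hypotheses (f_mono : forall a b, le a b -> le (f a) (f b))
           (g_mono : forall a b, le a b -> le (g a) (g b)).

Lemma covers_map a b : covers_in le setT a b -> covers_in le setT (f a) (f b).
Proof.
  intros Hab; apply covers_intro; [exact (f_mono (covers_le Hab))| |].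
  - intro E; apply (covers_neq Hab); rewrite <- (fK a), E; apply fK.
  - intros c H1 H2; rewrite <- (gK c).
    destruct (covers_between (c := g c) Hab) as [-> | ->]; [| |left|right]; try reflexivity.
    + rewrite <- (fK b); exact (g_mono H1).
    + rewrite <- (fK a); exact (g_mono H2).
Qed.

Lemma lub_list_map z l w : lub_list le z l w -> lub_list le (f z) (map f l) (f w).
Proof.
  intros (_ & Hub & Hleast); split; [exact I|split].
  - intros x [-> | Hx]; [apply f_mono, Hub; left; reflexivity|].
    apply in_map_iff in Hx as (y & <- & Hy); apply f_mono, Hub; right; exact Hy.
  - intros y _ Hy; rewrite <- (gK y); apply f_mono, Hleast; [exact I|].
    intros x Hx; rewrite <- (fK x); apply g_mono, Hy.
    destruct Hx as [-> | Hx]; [left; reflexivity|right; apply in_map, Hx].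
Qed.

End OrderAutomorphism.

Section RightLGroup.
Variables (T : Type) (mul : T -> T -> T) (inv : T -> T) (e : T) (le : T -> T -> Prop).
Hypothesis lgroup : right_lgroup mul inv e le.
Hypothesis le_modular : modular_on le setT.
Hypothesis le_noetherian : noetherian le.
Local Infix "*" := mul.
Local Notation cov := (covers_in le setT).

Lemma mulA a b c : a * b * c = a * (b * c).
Proof. destruct lgroup as (H & _); apply H. Qed.

Lemma mul1g a : e * a = a.
Proof. destruct lgroup as (_ & H & _); apply H. Qed.

Lemma mulg1 a : a * e = a.
Proof. destruct lgroup as (_ & _ & H & _); apply H. Qed.

Lemma mulVg a : inv a * a = e.
Proof. destruct lgroup as (_ & _ & _ & H & _); apply H. Qed.

Lemma mulgV a : a * inv a = e.
Proof. destruct lgroup as (_ & _ & _ & _ & H & _); apply H. Qed.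

Lemma lgroup_po : partial_order le.
Proof. destruct lgroup as (_ & _ & _ & _ & _ & H & _); apply H. Qed.

Lemma lgroup_lattice : lattice_on le setT.
Proof. destruct lgroup as (_ & _ & _ & _ & _ & _ & _ & H); apply H. Qed.

Lemma le_mulr k a b : le a b -> le (a * k) (b * k).
Proof. destruct lgroup as (_ & _ & _ & _ & _ & _ & H & _); apply H. Qed.

Lemma mulgK k a : a * k * inv k = a.
Proof. rewrite mulA, mulgV; apply mulg1. Qed.

Lemma mulgVK k a : a * inv k * k = a.
Proof. rewrite mulA, mulVg; apply mulg1. Qed.

Lemma mulIg k a b : a * k = b * k -> a = b.
Proof. intro E; rewrite <- (mulgK k a), E; apply mulgK. Qed.

Lemma invgK a : inv (inv a) = a.
Proof. apply (mulIg (k := inv a)); rewrite mulVg, mulgV; reflexivity. Qed.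

Lemma covers_mulr k a b : cov a b -> cov (a * k) (b * k).
Proof. apply (covers_map (mulgK k) (mulgVK k) (le_mulr k) (le_mulr (inv k))). Qed.

Lemma lub_list_mulr k z l w :
  lub_list le z l w -> lub_list le (z * k) (map (fun x => x * k) l) (w * k).
Proof. apply (lub_list_map (mulgK k) (mulgVK k) (le_mulr k) (le_mulr (inv k))). Qed.

Lemma glb_list_mulr k z l w :
  glb_list le z l w -> glb_list le (z * k) (map (fun x => x * k) l) (w * k).
Proof.
  apply (lub_list_map (le := dual le) (mulgK k) (mulgVK k)
           (fun a b => le_mulr k (a := b) (b := a)) (fun a b => le_mulr (inv k) (a := b) (b := a))).
Qed.

Lemma coatom_inv_covers x : cov e x -> cov (inv x) e.
Proof.
  intro Hx; pose proof (covers_mulr (inv x) Hx) as H; rewrite mul1g, mulgV in H; exact H.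
Qed.

(* With [r = inv w * s >= e] one has [w * r^(n+1) = s * r^n <= w * r^n]; DCC above [e] stops
   this descent, forcing [s = w]. *)
Lemma eq_of_le_inv_le s w : le e s -> le s w -> le (inv s) (inv w) -> w = s.
Proof.
  intros Hes Hsw Hinv.
  set (r := inv w * s).
  assert (Her : le e r) by (pose proof (le_mulr s Hinv) as H; rewrite mulVg in H; exact H).
  assert (Hwr : w * r = s) by (unfold r; rewrite <- mulA, mulgV; apply mul1g).
  assert (Hew : le e w) by exact (le_trans lgroup_po Hes Hsw).
  assert (Hpow : forall n, le e (Nat.iter n (mul r) e)).
  { induction n as [|n IH]; [apply (le_refl lgroup_po)|].
    apply (le_trans lgroup_po IH); pose proof (le_mulr (Nat.iter n (mul r) e) Her) as H.
    rewrite mul1g in H; exact H. }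
  destruct (proj1 (le_noetherian e) (fun n => w * Nat.iter n (mul r) e)) as [N HN].
  - intro n; apply (le_trans lgroup_po (Hpow n)).
    pose proof (le_mulr (Nat.iter n (mul r) e) Hew) as H; rewrite mul1g in H; exact H.
  - intro n; simpl; rewrite <- mulA, Hwr; apply le_mulr, Hsw.
  - symmetry; apply (mulIg (k := Nat.iter N (mul r) e)).
    rewrite <- Hwr at 1; rewrite mulA; exact (HN (S N) (Nat.le_succ_diag_r N)).
Qed.

Variable t : T.
Hypothesis t_glb : glb_in le setT (fun g => cov e g) t.

Lemma glb_coatoms_le_e : le t e.
Proof.
  destruct (classic (exists x, cov e x)) as [[x Hx]|Hnone].
  - apply (le_trans lgroup_po) with x; [apply t_glb, Hx|exact (covers_le Hx)].
  - assert (Htop : forall y, le y t).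
    { intro y; apply t_glb; [exact I|]; intros x Hx; exfalso; apply Hnone; exists x; exact Hx. }
    pose proof (le_mulr (inv t) (Htop (t * t))) as H; rewrite mulgK, mulgV in H; exact H.
Qed.

Lemma glb_coatoms_finite : exists F, coatoms_under le e F /\ glb_list le e F t.
Proof.
  pose (A m := exists F, coatoms_under le e F /\ glb_list le e F m).
  assert (Hlow : forall m, A m -> le t m).
  { intros m (F & HF & _ & _ & Hgreat); apply Hgreat; [exact I|].
    intros x [-> | Hx]; [exact glb_coatoms_le_e|apply t_glb, HF, Hx]. }
  assert (Ae : A e) by (exists []; split; [intros m []|apply (glb_list_nil lgroup_po)]).
  destruct (dcc_minimal (proj1 (le_noetherian t)) Hlow Ae) as (m & (F & HF & Hm) & Hmin).
  exists F; split; [exact HF|].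
  replace t with m; [exact Hm|].
  apply (le_anti lgroup_po); [|apply Hlow; exists F; split; assumption].
  apply t_glb; [exact I|]; intros x Hx.
  assert (Hxm : meet le x m = m).
  { apply Hmin; [|apply (le_meetr lgroup_lattice)].
    exists (x :: F); split; [intros y [<- | Hy]; auto|].
    exact (glb_list_cons lgroup_po Hm (meet_spec lgroup_lattice x m)). }
  rewrite <- Hxm; apply (le_meetl lgroup_lattice).
Qed.

Lemma glb_coatoms_le_inv u l : atoms_over le e l -> lub_list le e l u -> le t (inv u).
Proof.
  intros Hl Hu.
  destruct (meet_coatoms_of_join_atoms lgroup_po lgroup_lattice le_modular Hl Hu)
    as (ml & Hml & Hglb).
  pose proof (glb_list_mulr (inv u) Hglb) as Hglb'; rewrite mulgV, mul1g in Hglb'.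
  destruct Hglb' as (_ & _ & Hgreat).
  apply Hgreat; [exact I|]; intros x [-> | Hx]; [exact glb_coatoms_le_e|].
  apply in_map_iff in Hx as (m & <- & Hm); apply t_glb.
  pose proof (covers_mulr (inv u) (Hml m Hm)) as H; rewrite mulgV in H; exact H.
Qed.

Lemma inv_glb_join_atoms : exists L, atoms_over le e L /\ lub_list le e L (inv t).
Proof.
  destruct glb_coatoms_finite as (F & HF & Hglb).
  destruct (join_atoms_of_meet_coatoms lgroup_po lgroup_lattice le_modular HF Hglb)
    as (ml & Hml & Hlub).
  exists (map (fun x => x * inv t) ml); split.
  - intros a Ha; apply in_map_iff in Ha as (m & <- & Hm).
    pose proof (covers_mulr (inv t) (Hml m Hm)) as H; rewrite mulgV in H; exact H.
  - pose proof (lub_list_mulr (inv t) Hlub) as H; rewrite mulgV, mul1g in H; exact H.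
Qed.

Lemma covers_le_inv_glb g : cov g e -> le g (inv t).
Proof.
  intro Hg; destruct inv_glb_join_atoms as (L & HL & Hs).
  set (w := join le g (inv t)).
  assert (Hw : lub_list le e (g :: L) w)
    by exact (lub_list_cons lgroup_po Hs (join_spec lgroup_lattice g (inv t))).
  assert (Hatoms : atoms_over le e (g :: L)) by (intros a [<- | Ha]; auto).
  assert (Hes : le e (inv t)) by (apply Hs; left; reflexivity).
  assert (Hinv : le (inv (inv t)) (inv w))
    by (rewrite invgK; exact (glb_coatoms_le_inv Hatoms Hw)).
  rewrite <- (eq_of_le_inv_le Hes (le_joinr lgroup_lattice g (inv t)) Hinv).
  apply (le_joinl lgroup_lattice).
Qed.

Lemma lub_covers_inv_glb : lub_in le setT (fun g => cov g e) (inv t).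
Proof.
  destruct inv_glb_join_atoms as (L & HL & _ & _ & Hleast).
  split; [exact I|split; [exact covers_le_inv_glb|]].
  intros y _ Hy; apply Hleast; [exact I|]; intros x [-> | Hx]; [|apply Hy, HL, Hx].
  destruct (classic (exists g, cov g e)) as [[g Hg]|Hnone].
  - exact (le_trans lgroup_po (covers_le Hg) (Hy g Hg)).
  - assert (Hyt : le (inv y) t).
    { apply t_glb; [exact I|]; intros a Ha; exfalso; apply Hnone.
      exists (inv a); exact (coatom_inv_covers Ha). }
    pose proof (le_mulr y (le_trans lgroup_po Hyt glb_coatoms_le_e)) as H.
    rewrite mulVg, mul1g in H; exact H.
Qed.

End RightLGroup.

Theorem mainTheorem10 (T : Type) (mul : T -> T -> T) (inv : T -> T) (e : T)
  (le : T -> T -> Prop) (t : T) :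
  right_lgroup mul inv e le ->
  modular_on le setT ->
  noetherian le ->
  (* t = s^{-1} is the meet of X(G^-), the elements covered by e *)
  glb_in le setT (fun g => covers_in le setT e g) t ->
  lub_in le setT (fun g => covers_in le setT g e) (inv t) /\
  modular_geometric_on le (fun x => le e x /\ le x (inv t)).
Proof.
  intros lgroup le_modular le_noetherian t_glb; split.
  - exact (lub_covers_inv_glb lgroup le_modular le_noetherian t_glb).
  - destruct (inv_glb_join_atoms lgroup le_modular le_noetherian t_glb) as (L & HL & Hs).
    exact (interval_modular_geometric (lgroup_po lgroup) (lgroup_lattice lgroup) le_modular HL Hs).
Qed.
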